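(* Let $b>1$, $p\ge1$, $R\subseteq\{0,\ldots,p-1\}$, $I\subseteq\mathbb{N}$ finite and non-empty, and let $k$ be the greatest divisor of $p$ coprime with $b$. Let $(s,t)$ and $(s',t')$ be two states of $\mathcal{C}_{R,p,I}$ with $s\equiv s'\pmod k$. If neither $(s,t)$ nor $(s',t')$ is the initial state, then $(s,t)$ and $(s',t')$ are ultimately-equivalent.
   Context: $A_b=\{0,\ldots,b-1\}$. $\mathcal{A}_{R,p}$: states $\{0,\ldots,p-1\}$, initial $0$, final $R$, transitions $n\xrightarrow{a}(nb+a)\bmod p$. With $m=\max I$, $\mathcal{B}_I$: states $\{0,\ldots,m\}\cup\{\bot\}$, initial $0$, final $I$, transitions $i\xrightarrow{a}ib+a$ if $ib+a\le m$, else $i\xrightarrow{a}\bot$, and $\bot\xrightarrow{a}\bot$. $\mathcal{C}_{R,p,I}$ is the accessible part (states reachable from the initial state $(0,0)$) of the product of $\mathcal{A}_{R,p}$ and $\mathcal{B}_I$, with componentwise transitions and $(s,t)$ final iff exactly one of $s\in R$, $t\in I$ holds. Two states $x,y$ are ultimately-equivalent if there is $m\ge1$ with $x\cdot u=y\cdot u$ for all words $u$ with $|u|\ge m$ ($x\cdot u$ = state reached from $x$ reading $u$). *)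

From mathcomp Require Import all_boot.
Set Implicit Arguments. Unset Strict Implicit. Unset Printing Implicit Defensive.

Definition is_word (b : nat) (u : seq nat) : bool := all (fun a => a < b) u.

Definition stepA (b p : nat) (n a : nat) : nat := (n * b + a) %% p.

(* B_I with m = max I; the sink state \bot is encoded as None. *)
Definition stepB (b m : nat) (t : option nat) (a : nat) : option nat :=
  match t with
  | Some i => if i * b + a <= m then Some (i * b + a) else None
  | None => None
  end.

Definition maxI (I : seq nat) : nat := \max_(i <- I) i.

Definition stateC := (nat * option nat)%type.

Definition initC : stateC := (0, Some 0).

Definition stepC (b p m : nat) (x : stateC) (a : nat) : stateC :=
  (stepA b p x.1 a, stepB b m x.2 a).

Definition runC (b p m : nat) (x : stateC) (u : seq nat) : stateC :=
  foldl (stepC b p m) x u.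

Definition finalC (R I : seq nat) (x : stateC) : bool :=
  (x.1 \in R) (+) (if x.2 is Some t then t \in I else false).

(* States of C_{R,p,I}: the accessible part of the product. *)
Definition accessibleC (b p : nat) (I : seq nat) (x : stateC) : Prop :=
  exists u, is_word b u /\ runC b p (maxI I) initC u = x.

Definition ult_equiv (b p : nat) (I : seq nat) (x y : stateC) : Prop :=
  exists n, 1 <= n /\
    forall u, is_word b u -> n <= size u ->
      runC b p (maxI I) x u = runC b p (maxI I) y u.

From mathcomp Require Import all_boot.
From mathcomp Require Import zify.

Set Implicit Arguments.
Unset Strict Implicit.
Unset Printing Implicit Defensive.

(* With q = p %/ k, every divisor d of q divides b ^ d: a divisor coprime with
   b would enlarge k, so gcd(d, b) > 1 and one inducts on d %/ gcd(d, b).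
   Hence p divides k * b ^ n as soon as n >= q.  From s, a word u leads the
   first component to s * b ^ |u| + (0 . u) modulo p, so states congruent
   modulo k agree after q letters.  In the second component the only
   accessible state with value 0 is the initial one; from any other state a
   value t > 0 grows like t * b ^ n, so after more than max I letters both
   states are in the sink. *)

Section MaximalCoprimeDivisor.

Variables b p k : nat.
Hypothesis p_gt0 : 0 < p.
Hypothesis k_dvd_p : k %| p.
Hypothesis k_coprime_b : coprime k b.
Hypothesis k_max : forall d, d %| p -> coprime d b -> d <= k.

Lemma cofactor_dvd_expn d : d %| p %/ k -> d %| b ^ d.
Proof.
have k_gt0 : 0 < k by apply: dvdn_gt0 k_dvd_p.
have q_gt0 : 0 < p %/ k by rewrite divn_gt0 // dvdn_leq.
elim/ltn_ind: d => d IH d_dvd_q.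
have d_gt0 : 0 < d := dvdn_gt0 q_gt0 d_dvd_q.
have [db_coprime | db_not_coprime] := eqVneq (gcdn d b) 1.
  have dk_dvd_p : d * k %| p by rewrite -(divnK k_dvd_p) dvdn_pmul2r.
  have dk_coprime_b : coprime (d * k) b.
    by rewrite coprimeMl k_coprime_b andbT /coprime db_coprime.
  have : d * k <= 1 * k by rewrite mul1n k_max.
  by rewrite leq_pmul2r // => d_le1; have -> : d = 1 by lia.
set g := gcdn d b.
have g_gt1 : 1 < g by rewrite ltn_neqAle eq_sym db_not_coprime gcdn_gt0 d_gt0.
have dE : d = d %/ g * g by rewrite divnK ?dvdn_gcdl.
have lt_dg_d : d %/ g < d by rewrite ltn_Pdiv // ltnW.
have dg_dvd_q : d %/ g %| p %/ k.
  by apply: dvdn_trans d_dvd_q; rewrite {2}dE dvdn_mulr.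
apply: (@dvdn_trans (b ^ (d %/ g).+1)); last by rewrite dvdn_exp2l.
by rewrite {1}dE expnSr dvdn_mul ?IH ?dvdn_gcdr.
Qed.

Lemma dvdn_mul_expn n : p %/ k <= n -> p %| k * b ^ n.
Proof.
move=> le_q_n; rewrite -{1}(divnK k_dvd_p) mulnC dvdn_pmul2l ?(dvdn_gt0 p_gt0 k_dvd_p) //.
apply: (@dvdn_trans (b ^ (p %/ k))); first exact: cofactor_dvd_expn.
by rewrite dvdn_exp2l.
Qed.

End MaximalCoprimeDivisor.

Lemma eqn_modMr_dvd k p c s s' :
  p %| k * c -> s = s' %[mod k] -> s * c = s' * c %[mod p].
Proof.
move=> p_dvd_kc eq_ss'.
by rewrite -(modn_dvdm _ p_dvd_kc) -(modn_dvdm (s' * c) p_dvd_kc) -!muln_modl eq_ss'.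
Qed.

Lemma runCE b p m x u :
  runC b p m x u = (foldl (stepA b p) x.1 u, foldl (stepB b m) x.2 u).
Proof. by elim: u x => [|a u IH] [s t] //=; rewrite /runC /= -IH. Qed.

Lemma foldl_stepA_mod b p s u :
  foldl (stepA b p) s u = s * b ^ size u + foldl (stepA b p) 0 u %[mod p].
Proof.
elim/last_ind: u => [|u a IH]; first by rewrite muln1 addn0.
rewrite !foldl_rcons /stepA size_rcons expnSr !modn_mod modnDmr.
by rewrite -modnDml -modnMml IH modnMml modnDml mulnDl mulnA addnA.
Qed.

Lemma foldl_stepA_eq b p s s' u : u != [::] ->
  s * b ^ size u = s' * b ^ size u %[mod p] ->
  foldl (stepA b p) s u = foldl (stepA b p) s' u.
Proof.
case/lastP: u => [//|u a] _ eq_ss'.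
have reduced r : foldl (stepA b p) r (rcons u a) %% p = foldl (stepA b p) r (rcons u a).
  by rewrite foldl_rcons modn_mod.
by rewrite -reduced -[RHS]reduced !foldl_stepA_mod -modnDml eq_ss' modnDml.
Qed.

Lemma foldl_stepB_None b m u : foldl (stepB b m) None u = None.
Proof. by elim: u. Qed.

Lemma foldl_stepB_Some_ge b m t u v :
  foldl (stepB b m) (Some t) u = Some v -> t * b ^ size u <= v.
Proof.
elim: u t => [|a u IH] t /=; first by case=> ->; rewrite muln1.
case: ifP => _; last by rewrite foldl_stepB_None.
by move/IH; rewrite expnS; nia.
Qed.

Lemma foldl_stepB_Some_le b m t u v :
  foldl (stepB b m) (Some t) u = Some v -> v <= maxn t m.
Proof.
elim: u t => [|a u IH] t /=; first by case=> ->; rewrite leq_maxl.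
case: ifP => [le_m|_]; last by rewrite foldl_stepB_None.
by move/IH; lia.
Qed.

Lemma foldl_stepB_sink b m o u : 1 < b -> o != Some 0 -> m < size u ->
  foldl (stepB b m) o u = None.
Proof.
move=> b_gt1 o_neq0 lt_m_u; case: o o_neq0 => [t|_]; last exact: foldl_stepB_None.
rewrite (inj_eq (@Some_inj _)) -lt0n => t_gt0.
case E: foldl => [v|] //; exfalso.
have := foldl_stepB_Some_ge E; have := foldl_stepB_Some_le E.
have := ltn_expl (size u) b_gt1; nia.
Qed.

Lemma runC_init_Some0 b p m u : 0 < b ->
  (runC b p m initC u).2 = Some 0 -> runC b p m initC u = initC.
Proof.
move=> b_gt0; elim: u => [//|[|a] u IH]; rewrite /runC /=.
  by rewrite /stepC /stepA /= mod0n; apply: IH.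
rewrite -/(runC _ _ _ _ _) runCE /=.
case: ifP => _; last by rewrite foldl_stepB_None.
by move/foldl_stepB_Some_ge; rewrite leqn0 muln_eq0 [_ ^ _ == 0]eqn0Ngt expn_gt0 b_gt0 orbF.
Qed.

Lemma accessibleC_Some0 b p I x : 0 < b -> accessibleC b p I x ->
  x.2 = Some 0 -> x = initC.
Proof. by move=> b_gt0 [u [_ <-]]; apply: runC_init_Some0. Qed.

Theorem lemma42 (b p : nat) (R I : seq nat) (k : nat) (x y : stateC) :
  1 < b -> 1 <= p ->
  all (fun r => r < p) R ->
  I != [::] ->
  (* k is the greatest divisor of p coprime with b *)
  k %| p -> coprime k b ->
  (forall d, d %| p -> coprime d b -> d <= k) ->
  accessibleC b p I x -> accessibleC b p I y ->
  x.1 = y.1 %[mod k] ->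
  x <> initC -> y <> initC ->
  ult_equiv b p I x y.
Proof.
move=> b_gt1 p_gt0 _ _ k_dvd_p k_coprime_b k_max x_acc y_acc eq_xy_mod x_ninit y_ninit.
have b_gt0 : 0 < b by apply: ltnW.
have not_Some0 z : accessibleC b p I z -> z <> initC -> z.2 != Some 0.
  by move=> z_acc z_ninit; apply/eqP => /(accessibleC_Some0 b_gt0 z_acc).
exists ((maxI I).+1 + p %/ k); split=> [|u _ le_n_u]; first by rewrite addSn.
have lt_m_u : maxI I < size u by apply: leq_trans le_n_u; rewrite leq_addr.
have le_q_u : p %/ k <= size u by apply: leq_trans le_n_u; rewrite leq_addl.
rewrite !runCE !foldl_stepB_sink ?not_Some0 //.
congr (_, _); apply: foldl_stepA_eq; first by rewrite -size_eq0 -lt0n (leq_trans _ lt_m_u).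
exact: eqn_modMr_dvd (dvdn_mul_expn p_gt0 k_dvd_p k_coprime_b k_max le_q_u) eq_xy_mod.
Qed.
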